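(* Consider the faulty-starter delivery problem described in the context, with finisher starting position $(x,y)$, $y\ge0$, and $(x,y)\notin D(1,1)$. Then for every $a\in[0,1]$ and every algorithm $\mathcal{A}_a$ of the class described in the context, either $\mathrm{CR}_{\mathcal{A}_1}\le\mathrm{CR}_{\mathcal{A}_a}$ or $\mathrm{CR}_{\mathcal{A}_0}\le\mathrm{CR}_{\mathcal{A}_a}$.
   Context: Setting. In the plane let $S=(0,0)$ and $T=(1,0)$. A ''starter'' drone carrying a package starts at $S$ at time $0$ and moves at unit speed along $\overline{ST}$ towards $T$. At an unknown time $t\in[0,1]$ it fails and stays forever at $(t,0)$ with the package (at time $s$ the package is at $(\min\{s,t\},0)$). A ''finisher'' drone starts at time $0$ at $P=(x,y)$ with $y\ge0$, moves at unit speed and can stop and turn instantaneously. The package can be handed over only when the drones are co-located; it is delivered at the first time the finisher, carrying the package, is at $T$. An online algorithm $\mathcal{A}$ specifies the finisher's trajectory using only $(x,y)$; $A(t)$ is its delivery time for fail time $t$. $\mathrm{Opt}(t)=\max\{1,\sqrt{(x-t)^2+y^2}+1-t\}$ is the optimal offline delivery time. $\mathrm{CR}_{\mathcal{A}}(t)=A(t)/\mathrm{Opt}(t)$ and $\mathrm{CR}_{\mathcal{A}}=\sup_{0\le t\le1}\mathrm{CR}_{\mathcal{A}}(t)$. $D(c,r)$ denotes the open disk of radius $r$ centered at $(c,0)$. Algorithms. $\mathcal{A}_0$: the finisher goes straight to $S$, then along $\overline{ST}$ towards $T$ until it finds the package, then on to $T$. $\mathcal{A}_1$: the finisher goes straight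 to $T$, then along the segment towards $S$ until it finds the package, then returns to $T$. For $a\in[0,1]$, an algorithm $\mathcal{A}_a$ is any online algorithm in which the finisher moves from $P$ along a straight line to $(a,0)$ and afterwards remains within $\overline{ST}$ until it picks up the package, after which it goes to $T$. *)

From Stdlib Require Import Reals Lra.
Open Scope R_scope.

Definition pt : Type := (R * R)%type.

Definition edist (u v : pt) : R :=
  sqrt ((fst u - fst v) ^ 2 + (snd u - snd v) ^ 2).

Definition Spt : pt := (0, 0).
Definition Tpt : pt := (1, 0).

(* Position of the package at time s when the starter fails at time t. *)
Definition pkg (t s : R) : pt := (Rmin s t, 0).

Definition speed_le_1 (p : R -> pt) : Prop :=
  forall s s', 0 <= s -> 0 <= s' -> edist (p s) (p s') <= Rabs (s - s').

Definition first_meet (p : R -> pt) (t tau : R) : Prop :=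
  0 <= tau /\ p tau = pkg t tau /\
  (forall s, 0 <= s < tau -> p s <> pkg t s).

Definition delivery (p : R -> pt) (tau : R) : R := tau + edist (p tau) Tpt.

(* Optimal offline delivery time for finisher start (x,y). *)
Definition Opt (x y t : R) : R :=
  Rmax 1 (sqrt ((x - t) ^ 2 + y ^ 2) + 1 - t).

(* "CR_p <= M", i.e. sup_{t in [0,1]} A(t)/Opt(t) <= M, where A(t) = +oo
   if the finisher never picks up the package. *)
Definition CR_bounded (x y : R) (p : R -> pt) (M : R) : Prop :=
  forall t, 0 <= t <= 1 ->
    exists tau, first_meet p t tau /\ delivery p tau / Opt x y t <= M.

(* CR_p <= CR_q (as elements of [0, +oo]). *)
Definition CR_le (x y : R) (p q : R -> pt) : Prop :=
  forall M, CR_bounded x y q M -> CR_bounded x y p M.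

(* Straight unit-speed motion from P=(x,y) towards Q, position at time s
   (for 0 <= s <= edist P Q). *)
Definition seg_pos (x y : R) (Q : pt) (s : R) : pt :=
  let d := edist (x, y) Q in
  (x + s * (fst Q - x) / d, y + s * (snd Q - y) / d).

Definition traj0 (x y : R) (s : R) : pt :=
  let d := edist (x, y) Spt in
  if Rle_dec s d then seg_pos x y Spt s
  else if Rle_dec s (d + 1) then (s - d, 0) else Tpt.

Definition traj1 (x y : R) (s : R) : pt :=
  let d := edist (x, y) Tpt in
  if Rle_dec s d then seg_pos x y Tpt s
  else if Rle_dec s (d + 1) then (1 - (s - d), 0) else Spt.

Definition is_Aa (x y a : R) (p : R -> pt) : Prop :=
  speed_le_1 p /\
  (forall s, 0 <= s <= edist (x, y) (a, 0) -> p s = seg_pos x y (a, 0) s) /\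
  (forall s, edist (x, y) (a, 0) <= s -> snd (p s) = 0 /\ 0 <= fst (p s) <= 1).

From Stdlib Require Import Reals Lra Psatz Classical.
Open Scope R_scope.

(* Write D q for the distance from P = (x, y) to (q, 0).  Outside D(1, 1) we have
   Opt t = D t + 1 - t, and A_0, A_1 deliver by times D 0 + 1 and D 1 + 2 (1 - t).
   Let W be the delivery time of the finisher p when the starter fails at T, so that
   CR_p >= W / D 1.  If W >= D 0 + 1, then A_0 is no worse than p.  Otherwise p picks
   the package up at T at time W, and for every t it either picks it up by time W,
   forcing Opt t <= W, or later, forcing a delivery time >= W + 2 (1 - t).  At the
   first m with Opt m <= W both bounds hold, so CR_p >= (Opt m + 2 (1 - m)) / Opt m;
   as D s / (1 - s) is nondecreasing, this dominates the ratio of A_1 at every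
   t >= m, while for t < m the second bound applies directly. *)

Lemma Rdiv_le_iff a b M : 0 < b -> (a / b <= M <-> a <= M * b).
Proof.
  intros Hb. unfold Rdiv. split; intros H.
  - apply (Rmult_le_compat_r b) in H; [|lra].
    rewrite Rmult_assoc, Rinv_l, Rmult_1_r in H; lra.
  - apply (Rmult_le_reg_r b); [exact Hb|].
    rewrite Rmult_assoc, Rinv_l, Rmult_1_r; lra.
Qed.

Lemma continuity_pt_pos_nbhd f m : continuity_pt f m -> 0 < f m ->
  exists delta, 0 < delta /\ forall s, Rabs (s - m) < delta -> 0 < f s.
Proof.
  intros Hf Hpos.
  destruct (Hf (f m) Hpos) as [delta [Hdelta Hnear]].
  exists delta; split; [lra|]. intros s Hs.
  destruct (Req_dec s m) as [-> | Hsm]; [exact Hpos|].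
  assert (Hclose : Rabs (f s - f m) < f m).
  { apply (Hnear s). split; [split; [exact I | now apply not_eq_sym] | exact Hs]. }
  apply Rabs_def2 in Hclose. lra.
Qed.

Lemma first_crossing_nonpos (g h : R -> R) a b :
  a <= b -> (forall s, continuity_pt g s) -> (forall s, continuity_pt h s) ->
  0 < g a -> g b <= 0 -> (forall s, a <= s <= b -> 0 < g s -> h s <= 0) ->
  exists m, a <= m <= b /\ g m <= 0 /\ h m <= 0.
Proof.
  intros Hab Hg Hh Hga Hgb Hgh.
  set (E := fun e => a <= e <= b /\ forall s, a <= s <= e -> 0 < g s).
  assert (HEa : E a).
  { split; [lra|]. intros s Hs. replace s with a by lra. exact Hga. }
  destruct (completeness E) as [m [Hub Hlub]].
  { exists b. intros e He. apply He. }
  { exists a. exact HEa. }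
  assert (Ham : a <= m) by (apply Hub, HEa).
  assert (Hmb : m <= b) by (apply Hlub; intros e He; apply He).
  assert (Hbefore : forall s, a <= s < m -> 0 < g s).
  { intros s Hs. destruct (Rlt_or_le 0 (g s)) as [|Hgs]; [assumption|].
    exfalso. enough (m <= s) by lra.
    apply Hlub. intros e [_ Hpos].
    destruct (Rle_or_lt e s) as [|Hse]; [assumption|].
    specialize (Hpos s ltac:(lra)). lra. }
  assert (Hgm : g m <= 0).
  { destruct (Rle_or_lt (g m) 0) as [|Hgm]; [assumption|].
    destruct (continuity_pt_pos_nbhd g m (Hg m) Hgm) as [d [Hd Hnear]].
    assert (Hmb' : m < b) by (destruct (Req_dec m b) as [->|]; lra).
    set (e := Rmin (m + d / 2) b).
    assert (He : m < e) by (apply Rmin_glb_lt; lra).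
    assert (He_le : e <= m + d / 2) by apply Rmin_l.
    assert (HEe : E e).
    { split; [split; [lra | apply Rmin_r]|]. intros s Hs.
      destruct (Rlt_or_le s m); [apply Hbefore; lra|].
      apply Hnear. rewrite Rabs_right; lra. }
    pose proof (Hub e HEe). lra. }
  exists m. do 2 (split; [lra|]).
  destruct (Rle_or_lt (h m) 0) as [|Hhm]; [assumption|].
  destruct (continuity_pt_pos_nbhd h m (Hh m) Hhm) as [d [Hd Hnear]].
  assert (Ham' : a < m) by (destruct (Req_dec a m) as [<-|]; lra).
  set (s := Rmax a (m - d / 2)).
  assert (Hs : a <= s < m) by (split; [apply Rmax_l | apply Rmax_lub_lt; lra]).
  assert (Hs_ge : m - d / 2 <= s) by apply Rmax_r.
  assert (Hhs : 0 < h s) by (apply Hnear; rewrite Rabs_left; lra).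
  pose proof (Hgh s ltac:(lra) (Hbefore s Hs)). lra.
Qed.

Definition axis_dist (x y q : R) : R := sqrt ((x - q) ^ 2 + y ^ 2).

Lemma axis_dist_ge0 x y q : 0 <= axis_dist x y q.
Proof. apply sqrt_pos. Qed.

Lemma axis_dist_sq x y q : axis_dist x y q ^ 2 = (x - q) ^ 2 + y ^ 2.
Proof.
  apply pow2_sqrt.
  pose proof (pow2_ge_0 (x - q)). pose proof (pow2_ge_0 y). lra.
Qed.

Lemma axis_dist_on_axis x q : axis_dist x 0 q = Rabs (x - q).
Proof.
  unfold axis_dist. rewrite <- sqrt_Rsqr_abs. f_equal. unfold Rsqr. ring.
Qed.

Lemma edist_to_axis x y q : edist (x, y) (q, 0) = axis_dist x y q.
Proof. unfold edist, axis_dist. simpl. f_equal. ring. Qed.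

Lemma edist_on_axis a b : edist (a, 0) (b, 0) = Rabs (a - b).
Proof. rewrite edist_to_axis. apply axis_dist_on_axis. Qed.

Lemma axis_dist_le_right x y q t : q <= t ->
  axis_dist x y t <= axis_dist x y q + (t - q).
Proof.
  intros Hqt.
  pose proof (axis_dist_ge0 x y q). pose proof (axis_dist_ge0 x y t).
  pose proof (axis_dist_sq x y q). pose proof (axis_dist_sq x y t).
  assert (q - x <= axis_dist x y q) by nra.
  nra.
Qed.

Lemma axis_dist_continuous x y : continuity (axis_dist x y).
Proof.
  intro s. apply (continuity_pt_comp (fun q => (x - q) ^ 2 + y ^ 2) sqrt).
  - reg.
  - apply continuity_pt_sqrt.
    pose proof (pow2_ge_0 (x - s)). pose proof (pow2_ge_0 y). lra.
Qed.

(* For [u = 1 - t], [v = 1 - m], [D t ^ 2 v ^ 2 - D m ^ 2 u ^ 2] factors as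
   [(t - m) (D 1 ^ 2 (u + v) + 2 (x - 1) u v)], and the second factor is
   nonnegative because [x - 1 >= - D 1] and [D 1 >= 1]. *)
Lemma axis_dist_ratio_mono x y m t : 1 <= axis_dist x y 1 -> 0 <= m <= t -> t <= 1 ->
  axis_dist x y m * (1 - t) <= axis_dist x y t * (1 - m).
Proof.
  intros H1 Hmt Ht.
  pose proof (axis_dist_sq x y 1) as S1.
  pose proof (axis_dist_sq x y m) as Sm. pose proof (axis_dist_sq x y t) as St.
  pose proof (axis_dist_ge0 x y m). pose proof (axis_dist_ge0 x y t).
  set (d1 := axis_dist x y 1) in *.
  set (u := 1 - t). set (v := 1 - m).
  assert (Hx : - d1 <= x - 1) by nra.
  assert (Hu : 0 <= u <= 1) by (unfold u; lra).
  assert (Hv : 0 <= v <= 1) by (unfold v; lra).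
  assert (HK : 0 <= d1 ^ 2 * (u + v) + 2 * (x - 1) * u * v).
  { assert (0 <= (x - 1 + d1) * (u * v)) by (apply Rmult_le_pos; nra).
    assert (0 <= d1 * (d1 - 1) * (u + v)) by (apply Rmult_le_pos; nra).
    assert (0 <= d1 * (u * (1 - v) + v * (1 - u))) by (apply Rmult_le_pos; nra).
    nra. }
  assert (Hsq : (axis_dist x y m * u) ^ 2 <= (axis_dist x y t * v) ^ 2).
  { assert (E : (axis_dist x y t * v) ^ 2 - (axis_dist x y m * u) ^ 2
                = (t - m) * (d1 ^ 2 * (u + v) + 2 * (x - 1) * u * v)).
    { rewrite !Rpow_mult_distr, St, Sm, S1. unfold u, v. ring. }
    assert (0 <= (t - m) * (d1 ^ 2 * (u + v) + 2 * (x - 1) * u * v)).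
    { apply Rmult_le_pos; lra. }
    lra. }
  assert (0 <= axis_dist x y t * v) by (unfold v; nra).
  nra.
Qed.

Lemma axis_dist_le_self x y q : 1 <= axis_dist x y 1 -> q < 1 ->
  axis_dist x y q <= q -> x = 0 /\ y = 0.
Proof.
  intros H1 Hq Hle.
  pose proof (axis_dist_ge0 x y q). pose proof (axis_dist_ge0 x y 1).
  pose proof (axis_dist_sq x y q). pose proof (axis_dist_sq x y 1).
  assert (Hq2 : (x - q) ^ 2 + y ^ 2 <= q ^ 2) by nra.
  assert (H12 : 1 <= (x - 1) ^ 2 + y ^ 2) by nra.
  assert (Hx : x <= 0) by nra.
  assert (x * q <= 0) by nra.
  assert (x ^ 2 + y ^ 2 <= 0) by nra.
  split; nra.
Qed.

Lemma pos_axis_outside_disk x : 1 <= axis_dist x 0 1 -> 0 < x -> 2 <= x.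
Proof.
  rewrite axis_dist_on_axis. intros H1 Hx.
  destruct (Rle_or_lt 1 x); [rewrite Rabs_right in H1 | rewrite Rabs_left in H1]; lra.
Qed.

Lemma Opt_ge_1 x y t : 1 <= Opt x y t.
Proof. apply Rmax_l. Qed.

Lemma Opt_outside_disk x y t : 1 <= axis_dist x y 1 -> t <= 1 ->
  Opt x y t = axis_dist x y t + 1 - t.
Proof.
  intros H1 Ht. apply Rmax_right.
  pose proof (axis_dist_le_right x y t 1 Ht). fold (axis_dist x y t). lra.
Qed.

Lemma seg_pos_start x y Q : seg_pos x y Q 0 = (x, y).
Proof. unfold seg_pos. f_equal; unfold Rdiv; ring. Qed.

Lemma seg_pos_to_axis x y q s : axis_dist x y q <> 0 ->
  seg_pos x y (q, 0) s =
  (x + s / axis_dist x y q * (q - x), (1 - s / axis_dist x y q) * y).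
Proof.
  intros Hd. unfold seg_pos. rewrite edist_to_axis. simpl.
  f_equal; field; exact Hd.
Qed.

Lemma seg_pos_end x y q : seg_pos x y (q, 0) (axis_dist x y q) = (q, 0).
Proof.
  destruct (Req_dec (axis_dist x y q) 0) as [Hd | Hd].
  - pose proof (axis_dist_sq x y q) as S. rewrite Hd in S.
    pose proof (pow2_ge_0 (x - q)). pose proof (pow2_ge_0 y).
    assert (Hy : y = 0) by nra. assert (Hx : x = q) by nra. subst x y.
    rewrite Hd. apply seg_pos_start.
  - rewrite seg_pos_to_axis by exact Hd. f_equal; field; exact Hd.
Qed.

Lemma seg_pos_hits_axis x y q r s : 0 <= s < axis_dist x y q ->
  seg_pos x y (q, 0) s = (r, 0) -> y = 0 /\ 0 < (r - q) * (x - q).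
Proof.
  intros Hs E. set (d := axis_dist x y q) in *.
  rewrite seg_pos_to_axis in E by (fold d; intro; lra). fold d in E.
  apply pair_equal_spec in E as [Er Ey].
  assert (Hfrac : 0 < 1 - s / d).
  { replace (1 - s / d) with ((d - s) / d) by (field; lra).
    apply Rdiv_lt_0_compat; lra. }
  assert (Hy : y = 0) by nra.
  split; [exact Hy|].
  assert (Hxq : x <> q).
  { intros ->. unfold d in Hs.
    rewrite Hy, axis_dist_on_axis, Rminus_diag, Rabs_R0 in Hs. lra. }
  replace (r - q) with ((x - q) * (1 - s / d)) by (rewrite <- Er; field; lra).
  replace ((x - q) * (1 - s / d) * (x - q)) with (Rsqr (x - q) * (1 - s / d))
    by (unfold Rsqr; ring).
  apply Rmult_lt_0_compat; [apply Rsqr_pos_lt; lra | exact Hfrac].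
Qed.

Lemma traj0_segment x y s : s <= axis_dist x y 0 -> traj0 x y s = seg_pos x y Spt s.
Proof.
  intros Hs. unfold traj0, Spt. rewrite (edist_to_axis x y 0).
  destruct (Rle_dec s (axis_dist x y 0)); [reflexivity | lra].
Qed.

Lemma traj0_axis x y s : axis_dist x y 0 <= s <= axis_dist x y 0 + 1 ->
  traj0 x y s = (s - axis_dist x y 0, 0).
Proof.
  intros Hs. unfold traj0, Spt. rewrite (edist_to_axis x y 0).
  destruct (Rle_dec s (axis_dist x y 0)).
  - replace s with (axis_dist x y 0) by lra.
    rewrite Rminus_diag. apply seg_pos_end.
  - destruct (Rle_dec s (axis_dist x y 0 + 1)); [reflexivity | lra].
Qed.

Lemma traj1_segment x y s : s <= axis_dist x y 1 -> traj1 x y s = seg_pos x y Tpt s.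
Proof.
  intros Hs. unfold traj1, Tpt. rewrite (edist_to_axis x y 1).
  destruct (Rle_dec s (axis_dist x y 1)); [reflexivity | lra].
Qed.

Lemma traj1_axis x y s : axis_dist x y 1 <= s <= axis_dist x y 1 + 1 ->
  traj1 x y s = (1 - (s - axis_dist x y 1), 0).
Proof.
  intros Hs. unfold traj1, Tpt. rewrite (edist_to_axis x y 1).
  destruct (Rle_dec s (axis_dist x y 1)).
  - replace s with (axis_dist x y 1) by lra.
    rewrite Rminus_diag, Rminus_0_r. apply seg_pos_end.
  - destruct (Rle_dec s (axis_dist x y 1 + 1)); [reflexivity | lra].
Qed.

Lemma traj0_from_right x s : 0 < x -> 0 <= s <= x -> traj0 x 0 s = (x - s, 0).
Proof.
  intros Hx Hs.
  assert (Hd : axis_dist x 0 0 = x) by (rewrite axis_dist_on_axis, Rabs_right; lra).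
  rewrite traj0_segment by lra. unfold Spt.
  rewrite seg_pos_to_axis by lra. rewrite Hd. f_equal; field; lra.
Qed.

Lemma traj1_from_right x s : 1 < x -> 0 <= s <= x -> traj1 x 0 s = (x - s, 0).
Proof.
  intros Hx Hs.
  assert (Hd : axis_dist x 0 1 = x - 1) by (rewrite axis_dist_on_axis, Rabs_right; lra).
  destruct (Rle_or_lt s (x - 1)).
  - rewrite traj1_segment by lra. unfold Tpt.
    rewrite seg_pos_to_axis by lra. rewrite Hd. f_equal; field; lra.
  - rewrite traj1_axis by lra. rewrite Hd. f_equal. ring.
Qed.

Lemma first_meet_unique p t tau tau' :
  first_meet p t tau -> first_meet p t tau' -> tau = tau'.
Proof.
  intros [H0 [Hmeet Hfirst]] [H0' [Hmeet' Hfirst']].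
  destruct (Rtotal_order tau tau') as [Hlt | [Heq | Hgt]]; [| exact Heq |].
  - exfalso. exact (Hfirst' tau ltac:(lra) Hmeet).
  - exfalso. exact (Hfirst tau' ltac:(lra) Hmeet').
Qed.

Lemma first_meet_delivery p t tau : first_meet p t tau -> t <= 1 ->
  delivery p tau = tau + (1 - Rmin tau t).
Proof.
  intros [_ [Hmeet _]] Ht. unfold delivery. rewrite Hmeet.
  unfold pkg, Tpt. rewrite edist_on_axis, Rabs_left1.
  - ring.
  - pose proof (Rmin_r tau t). lra.
Qed.

Lemma first_meet_from_right p t x : 0 <= t -> 2 * t <= x ->
  (forall s, 0 <= s <= x - t -> p s = (x - s, 0)) -> first_meet p t (x - t).
Proof.
  intros Ht Hx Hp. split; [lra|]. split.
  - rewrite Hp by lra. unfold pkg. rewrite Rmin_right by lra. f_equal. ring.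
  - intros s Hs E. rewrite Hp in E by lra. unfold pkg in E.
    apply pair_equal_spec in E as [E _].
    pose proof (Rmin_r s t). lra.
Qed.

Lemma traj0_pickup x y t : 1 <= axis_dist x y 1 -> 0 <= t <= 1 ->
  exists tau, first_meet (traj0 x y) t tau /\
    delivery (traj0 x y) tau <= axis_dist x y 0 + 1.
Proof.
  intros H1 Ht. pose proof (axis_dist_ge0 x y 0) as Hd0.
  destruct (classic (y = 0 /\ 0 < x)) as [[-> Hx] | Hoff].
  - (* P lies right of T, and the finisher meets the package on its way to S. *)
    assert (Hd : axis_dist x 0 0 = x)
      by (rewrite axis_dist_on_axis, Rminus_0_r, Rabs_right; lra).
    rewrite Hd. pose proof (pos_axis_outside_disk x H1 Hx).
    exists (x - t).
    assert (Hm : first_meet (traj0 x 0) t (x - t)).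
    { apply first_meet_from_right; [lra | lra |].
      intros s Hs. apply traj0_from_right; lra. }
    split; [exact Hm|].
    rewrite (first_meet_delivery _ _ _ Hm), Rmin_right by lra. lra.
  - destruct (Req_dec (axis_dist x y 0) 0) as [Hz | Hnz].
    + exists 0.
      assert (Hm : first_meet (traj0 x y) t 0).
      { split; [lra|]. split; [| intros s Hs; lra].
        rewrite traj0_axis by lra. rewrite Hz. unfold pkg.
        rewrite Rmin_left by lra. f_equal. ring. }
      split; [exact Hm|].
      rewrite (first_meet_delivery _ _ _ Hm), Rmin_left by lra. lra.
    + set (d0 := axis_dist x y 0) in *.
      exists (d0 + t).
      assert (Hm : first_meet (traj0 x y) t (d0 + t)).
      { split; [lra|]. split.
        - rewrite traj0_axis by (fold d0; lra). fold d0. unfold pkg.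
          rewrite Rmin_right by lra. f_equal. ring.
        - intros s Hs E. unfold pkg in E.
          destruct (Rlt_or_le s d0).
          + rewrite traj0_segment in E by (fold d0; lra).
            apply seg_pos_hits_axis in E as [Hy Hpos]; [| fold d0; lra].
            assert (0 <= Rmin s t) by (apply Rmin_glb; lra).
            apply Hoff. split; [exact Hy | nra].
          + rewrite traj0_axis in E by (fold d0; lra). fold d0 in E.
            apply pair_equal_spec in E as [E _].
            assert (s - d0 < Rmin s t) by (apply Rmin_glb_lt; lra). lra. }
      split; [exact Hm|].
      rewrite (first_meet_delivery _ _ _ Hm), Rmin_right by lra. lra.
Qed.

(* Left of S on the axis, A_1 picks the package up on its way to T and behaves
   like A_0; that case never arises in the main proof. *)
Lemma traj1_pickup x y t : 1 <= axis_dist x y 1 -> ~ (y = 0 /\ x <= 0) -> 0 <= t <= 1 ->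
  exists tau, first_meet (traj1 x y) t tau /\
    delivery (traj1 x y) tau <= axis_dist x y 1 + 2 * (1 - t).
Proof.
  intros H1 Hneg Ht.
  destruct (Req_dec y 0) as [-> | Hy].
  - assert (Hx : 0 < x) by (apply Rnot_le_lt; intro; apply Hneg; auto).
    pose proof (pos_axis_outside_disk x H1 Hx).
    rewrite axis_dist_on_axis, Rabs_right by lra.
    exists (x - t).
    assert (Hm : first_meet (traj1 x 0) t (x - t)).
    { apply first_meet_from_right; [lra | lra |].
      intros s Hs. apply traj1_from_right; lra. }
    split; [exact Hm|].
    rewrite (first_meet_delivery _ _ _ Hm), Rmin_right by lra. lra.
  - set (d1 := axis_dist x y 1) in *.
    exists (d1 + 1 - t).
    assert (Hm : first_meet (traj1 x y) t (d1 + 1 - t)).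
    { split; [lra|]. split.
      - rewrite traj1_axis by (fold d1; lra). fold d1. unfold pkg.
        rewrite Rmin_right by lra. f_equal. ring.
      - intros s Hs E. unfold pkg in E.
        destruct (Rlt_or_le s d1).
        + rewrite traj1_segment in E by (fold d1; lra).
          apply seg_pos_hits_axis in E as [Hy0 _]; [contradiction | fold d1; lra].
        + rewrite traj1_axis in E by (fold d1; lra). fold d1 in E.
          apply pair_equal_spec in E as [E _].
          pose proof (Rmin_r s t). lra. }
    split; [exact Hm|].
    rewrite (first_meet_delivery _ _ _ Hm), Rmin_right by lra. lra.
Qed.

Lemma CR_bounded_delivery x y p M t tau : CR_bounded x y p M -> 0 <= t <= 1 ->
  first_meet p t tau -> delivery p tau <= M * Opt x y t.
Proof.
  intros HM Ht Hm. destruct (HM t Ht) as [tau' [Hm' Hratio]].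
  rewrite (first_meet_unique p t tau' tau Hm' Hm) in Hratio.
  apply Rdiv_le_iff in Hratio; [exact Hratio|].
  pose proof (Opt_ge_1 x y t). lra.
Qed.

Lemma traj0_CR_bounded x y M : 1 <= axis_dist x y 1 ->
  axis_dist x y 0 + 1 <= M * axis_dist x y 1 -> CR_bounded x y (traj0 x y) M.
Proof.
  intros H1 HM t Ht. destruct (traj0_pickup x y t H1 Ht) as [tau [Hm Hdel]].
  exists tau. split; [exact Hm|].
  apply Rdiv_le_iff; [pose proof (Opt_ge_1 x y t); lra|].
  rewrite Opt_outside_disk by lra.
  pose proof (axis_dist_le_right x y t 1 (proj2 Ht)).
  pose proof (axis_dist_ge0 x y 0).
  assert (0 <= M) by nra.
  nra.
Qed.

Lemma traj1_CR_bounded x y M : 1 <= axis_dist x y 1 -> ~ (y = 0 /\ x <= 0) ->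
  (forall t, 0 <= t <= 1 -> axis_dist x y 1 + 2 * (1 - t) <= M * Opt x y t) ->
  CR_bounded x y (traj1 x y) M.
Proof.
  intros H1 Hneg HM t Ht. destruct (traj1_pickup x y t H1 Hneg Ht) as [tau [Hm Hdel]].
  exists tau. split; [exact Hm|].
  apply Rdiv_le_iff; [pose proof (Opt_ge_1 x y t); lra|].
  specialize (HM t Ht). lra.
Qed.

Lemma traj1_ratio_le x y m t : 1 <= axis_dist x y 1 -> 0 <= m <= t -> t <= 1 ->
  (axis_dist x y 1 + 2 * (1 - t)) * (axis_dist x y m + 1 - m)
  <= (axis_dist x y m + 1 - m + 2 * (1 - m)) * (axis_dist x y t + 1 - t).
Proof.
  intros H1 Hmt Ht.
  pose proof (axis_dist_ratio_mono x y m t H1 Hmt Ht).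
  pose proof (axis_dist_le_right x y t 1 Ht).
  pose proof (axis_dist_ge0 x y m).
  nra.
Qed.

Section Pursuer.

Variables (x y : R) (p : R -> pt).
Hypotheses (p_speed : speed_le_1 p) (p_start : p 0 = (x, y))
  (P_outside : 1 <= axis_dist x y 1).

Lemma first_meet_reach t tau : first_meet p t tau -> axis_dist x y (Rmin tau t) <= tau.
Proof.
  intros [Htau [Hmeet _]].
  pose proof (p_speed 0 tau (Rle_refl 0) Htau) as Hs.
  rewrite p_start, Hmeet in Hs. unfold pkg in Hs.
  rewrite edist_to_axis, Rabs_left1 in Hs by lra. lra.
Qed.

Lemma Opt_le_delivery t tau : 0 <= t <= 1 -> first_meet p t tau ->
  Opt x y t <= delivery p tau.
Proof.
  intros Ht Hm.
  rewrite (first_meet_delivery p t tau Hm (proj2 Ht)), Opt_outside_disk by lra.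
  pose proof (first_meet_reach t tau Hm).
  pose proof (axis_dist_le_right x y (Rmin tau t) t (Rmin_r tau t)). lra.
Qed.

Lemma pickup_before_or_after t tau tau1 : 0 <= t <= 1 -> first_meet p t tau ->
  0 <= tau1 -> p tau1 = Tpt ->
  delivery p tau <= tau1 \/ tau1 + 2 * (1 - t) <= delivery p tau.
Proof.
  intros Ht Hm Htau1 HT.
  rewrite (first_meet_delivery p t tau Hm (proj2 Ht)).
  destruct Hm as [Htau [Hmeet _]].
  pose proof (p_speed tau tau1 Htau Htau1) as Hs.
  rewrite Hmeet, HT in Hs. unfold pkg, Tpt in Hs.
  rewrite edist_on_axis, Rabs_left1 in Hs by (pose proof (Rmin_r tau t); lra).
  pose proof (Rmin_r tau t).
  destruct (Rle_or_lt tau tau1); [left | right];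
    [rewrite Rabs_left1 in Hs | rewrite Rabs_right in Hs]; lra.
Qed.

Lemma fast_pickup_at_T tau1 : first_meet p 1 tau1 ->
  delivery p tau1 < axis_dist x y 0 + 1 -> p tau1 = Tpt /\ delivery p tau1 = tau1.
Proof.
  intros Hm Hfast.
  pose proof (first_meet_reach 1 tau1 Hm) as Hreach.
  rewrite (first_meet_delivery p 1 tau1 Hm (Rle_refl 1)) in Hfast |- *.
  destruct Hm as [Htau [Hmeet _]].
  destruct (Rlt_or_le tau1 1) as [Hlt | Hge].
  - exfalso. rewrite Rmin_left in Hreach, Hfast by lra.
    destruct (axis_dist_le_self x y tau1 P_outside Hlt Hreach) as [-> ->].
    rewrite axis_dist_on_axis, Rminus_0_r, Rabs_R0 in Hfast. lra.
  - rewrite Hmeet. unfold pkg, Tpt. rewrite Rmin_right by lra.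
    split; [reflexivity | ring].
Qed.

Lemma traj1_ratio_bound M tau1 : CR_bounded x y p M -> 0 <= tau1 -> p tau1 = Tpt ->
  axis_dist x y 1 <= tau1 -> tau1 < axis_dist x y 0 + 1 ->
  forall t, 0 <= t <= 1 -> axis_dist x y 1 + 2 * (1 - t) <= M * Opt x y t.
Proof.
  intros HM Htau1 HT Hd1 Hd0 t Ht.
  set (f := fun s => axis_dist x y s + 1 - s).
  assert (Hsplit : forall s, 0 <= s <= 1 -> f s <= tau1 \/ tau1 + 2 * (1 - s) <= M * f s).
  { intros s Hs. destruct (HM s Hs) as [tau [Hm _]].
    pose proof (CR_bounded_delivery x y p M s tau HM Hs Hm).
    pose proof (Opt_le_delivery s tau Hs Hm).
    rewrite Opt_outside_disk in * by lra. unfold f.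
    destruct (pickup_before_or_after s tau tau1 Hs Hm Htau1 HT); [left | right]; lra. }
  rewrite Opt_outside_disk by lra. fold (f t).
  destruct (Hsplit t Ht) as [Hft | Hlate]; [| lra].
  destruct (first_crossing_nonpos (fun s => f s - tau1)
              (fun s => tau1 + 2 * (1 - s) - M * f s) 0 t) as (m & Hm & Hgm & Hhm).
  - lra.
  - pose proof (axis_dist_continuous x y). intro s. unfold f. reg.
  - pose proof (axis_dist_continuous x y). intro s. unfold f. reg.
  - unfold f. lra.
  - lra.
  - intros s Hs Hgs. destruct (Hsplit s ltac:(lra)); lra.
  - pose proof (traj1_ratio_le x y m t P_outside Hm (proj2 Ht)) as Hratio.
    fold (f m) (f t) in Hratio.
    assert (Hfm : 1 <= f m).
    { pose proof (axis_dist_le_right x y m 1 ltac:(lra)). unfold f. lra. }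
    assert (Hft0 : 0 <= f t) by (unfold f; pose proof (axis_dist_ge0 x y t); lra).
    apply (Rmult_le_reg_r (f m)); [lra|].
    nra.
Qed.

End Pursuer.

Theorem lemma4 (x y : R) (hy : 0 <= y) (hP : ~ (edist (x, y) (1, 0) < 1))
  (a : R) (ha : 0 <= a <= 1) (p : R -> pt) (hp : is_Aa x y a p) :
  CR_le x y (traj1 x y) p \/ CR_le x y (traj0 x y) p.
Proof.
  destruct hp as [hspeed [hseg _]].
  assert (hstart : p 0 = (x, y)).
  { rewrite hseg, seg_pos_start; [reflexivity|].
    rewrite edist_to_axis. pose proof (axis_dist_ge0 x y a). lra. }
  assert (hout : 1 <= axis_dist x y 1) by (rewrite <- edist_to_axis; lra).
  destruct (classic (exists tau1, first_meet p 1 tau1)) as [[tau1 Hm1] | Hnone].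
  2: { left. intros M HM. exfalso. destruct (HM 1) as [tau [Hm _]]; [lra | eauto]. }
  pose proof (Opt_le_delivery x y p hspeed hstart hout 1 tau1 ltac:(lra) Hm1) as HW.
  rewrite Opt_outside_disk in HW by lra.
  destruct (Rle_or_lt (axis_dist x y 0 + 1) (delivery p tau1)) as [Hslow | Hfast].
  - right. intros M HM. apply traj0_CR_bounded; [exact hout|].
    pose proof (CR_bounded_delivery x y p M 1 tau1 HM ltac:(lra) Hm1) as HWM.
    rewrite Opt_outside_disk in HWM by lra. lra.
  - left.
    destruct (fast_pickup_at_T x y p hspeed hstart hout tau1 Hm1 Hfast) as [HT HWtau].
    intros M HM. apply traj1_CR_bounded; [exact hout | |].
    + intros [-> Hx].
      rewrite !axis_dist_on_axis, Rminus_0_r, !Rabs_left1 in * by lra. lra.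
    + apply (traj1_ratio_bound x y p hspeed hstart hout M tau1 HM);
        [apply Hm1 | exact HT | lra | lra].
Qed.
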